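(* Let $\mu\in P$. (i) If $\omega\in P^+$ is minuscule, then $\mu_++w_\mu\omega\in P^+$. (iia) If $\mu_++w_\mu\alpha_0\notin P^+$, then $w_\mu\alpha_0=-\alpha_j$ for some $1\le j\le n$, and moreover $\langle\mu_+,\alpha_j^\vee\rangle=1$. (iib) If $\mu_++w_\mu\alpha_0\in P^+$ and $w_\mu\alpha_0\in R^-$, then $\langle\mu_+,(w_\mu\alpha_0)^\vee\rangle\le-2$.
   Context: Let $R$ be an irreducible reduced crystallographic root system of rank $n$ spanning a real Euclidean space $V$ with inner product $\langle\cdot,\cdot\rangle$; $\alpha^\vee:=2\alpha/\langle\alpha,\alpha\rangle$; $P$ the weight lattice; $R^+$ positive roots with simple roots $\alpha_1,\dots,\alpha_n$, $R^-:=-R^+$; $P^+$ the dominant weights; $\alpha_0\in R^+$ the root such that $\alpha_0^\vee$ is the highest root of $R^\vee$. A weight $\omega\in P^+$ is minuscule if $\omega\ne0$ and $\langle\omega,\alpha^\vee\rangle\in\{0,1\}$ for all $\alpha\in R^+$. $W_0$ is the finite Weyl group; for $\mu\in P$, $w_\mu$ is the shortest element of $W_0$ with $w_\mu\mu\in P^+$ and $\mu_+:=w_\mu\mu$. *)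

From HB Require Import structures.
From mathcomp Require Import all_boot all_order all_algebra.
Set Implicit Arguments. Unset Strict Implicit. Unset Printing Implicit Defensive.
Import Order.TTheory GRing.Theory Num.Theory.
Local Open Scope ring_scope.

Section RootSystems.
Variables (R : realFieldType) (n : nat).
Notation V := 'rV[R]_n.

Definition dot (u v : V) : R := \sum_(i < n) u ord0 i * v ord0 i.

Definition coroot (a : V) : V := (2 / dot a a) *: a.

Definition pairing (x a : V) : R := dot x (coroot a).

Definition refl (a x : V) : V := x - pairing x a *: a.

Definition is_int (x : R) : Prop := exists z : int, x = z%:~R.

Definition irred_reduced_root_system (Rs : seq V) : Prop :=
  (0 : V) \notin Rs /\
      (forall v : V, exists c : 'I_(size Rs) -> R,
          v = \sum_(i < size Rs) c i *: Rs`_i) /\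
      (forall a b, a \in Rs -> b \in Rs -> refl a b \in Rs) /\
      (forall a b, a \in Rs -> b \in Rs -> is_int (pairing b a)) /\
      (forall a b (c : R), a \in Rs -> b \in Rs -> b = c *: a -> c = 1 \/ c = -1) /\
    (forall S : pred V,
         (forall a b, a \in Rs -> b \in Rs -> S a -> ~~ S b -> dot a b = 0) ->
         (forall a, a \in Rs -> S a) \/ (forall a, a \in Rs -> ~~ S a)).

Definition is_base (Rs : seq V) (D : 'I_n -> V) : Prop :=
  (forall i, D i \in Rs) /\
  (forall b, b \in Rs -> exists k : 'I_n -> int,
      b = \sum_(i < n) (k i)%:~R *: D i /\
      ((forall i, 0 <= k i) \/ (forall i, k i <= 0))).

Definition pos_root (Rs : seq V) (D : 'I_n -> V) (b : V) : Prop :=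
  b \in Rs /\ exists k : 'I_n -> int,
      b = \sum_(i < n) (k i)%:~R *: D i /\ (forall i, 0 <= k i).

Definition neg_root (Rs : seq V) (D : 'I_n -> V) (b : V) : Prop :=
  pos_root Rs D (- b).

Definition weight (Rs : seq V) (x : V) : Prop :=
  forall a, a \in Rs -> is_int (pairing x a).

Definition dominant (Rs : seq V) (D : 'I_n -> V) (x : V) : Prop :=
  weight Rs x /\ forall i, 0 <= pairing x (D i).

Definition minuscule (Rs : seq V) (D : 'I_n -> V) (w : V) : Prop :=
  dominant Rs D w /\ w <> 0 /\
  forall a, pos_root Rs D a -> pairing w a = 0 \/ pairing w a = 1.

(* alpha0 is a positive root such that alpha0^vee is the highest root of
   R^vee (w.r.t. the base of simple coroots alpha_i^vee) *)
Definition is_alpha0 (Rs : seq V) (D : 'I_n -> V) (a0 : V) : Prop :=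
  pos_root Rs D a0 /\
  forall b, b \in Rs -> exists k : 'I_n -> int,
      coroot a0 - coroot b = \sum_(i < n) (k i)%:~R *: coroot (D i) /\
      (forall i, 0 <= k i).

(* Elements of W_0 given by words in the simple reflections:
   the word [:: i1; ...; ik] acts as s_{i1} ... s_{ik}. *)
Definition weyl_act (D : 'I_n -> V) (s : seq 'I_n) (x : V) : V :=
  foldr (fun i y => refl (D i) y) x s.

(* s is a word of minimal length among all words w with w mu dominant;
   then weyl_act D s is the shortest element w_mu of W_0 with w_mu mu in P^+. *)
Definition shortest_dominating_word (Rs : seq V) (D : 'I_n -> V)
    (mu : V) (s : seq 'I_n) : Prop :=
  dominant Rs D (weyl_act D s mu) /\
  forall t : seq 'I_n, dominant Rs D (weyl_act D t mu) -> (size s <= size t)%N.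

End RootSystems.

(* Let w be a shortest word in the simple reflections with mu+ := w mu
   dominant.  The whole proof rests on one length argument: if b > 0 is a root
   with w b < 0, then w s_b is represented by a strictly shorter word
   (deletion), so minimality of w forces <mu+, (w b)^vee> <> 0.  Applied to the
   preimage b := w^-1 alpha_i of a simple root this gives
     (#)  w^-1 alpha_i < 0  ==>  <mu+, alpha_i^vee> >= 1.
   Since <w x, alpha_i^vee> = <x, b^vee>, part (i) follows from (#) and the
   pairing of a minuscule weight with roots taking values in {-1, 0, 1}.  For
   part (iia) we use that alpha_0 pairs nonnegatively with positive roots and
   that <alpha_0, b^vee> >= 2 forces b = alpha_0 (maximality of alpha_0^vee).
   Part (iib) is a computation: a dominant weight pairs nonnegatively with the
   positive root - w alpha_0. *)
From HB Require Import structures.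
From mathcomp Require Import all_boot all_order all_algebra.
From mathcomp Require Import ring lra.
Set Implicit Arguments. Unset Strict Implicit. Unset Printing Implicit Defensive.
Import Order.TTheory GRing.Theory Num.Theory.
Local Open Scope ring_scope.

Section InnerProduct.
Variables (R : realFieldType) (n : nat).
Notation V := 'rV[R]_n.
Implicit Types u v x y a b : V.

Lemma dotC u v : dot u v = dot v u.
Proof. by apply: eq_bigr => i _; rewrite mulrC. Qed.

Lemma dotDl u v x : dot (u + v) x = dot u x + dot v x.
Proof. by rewrite /dot -big_split; apply: eq_bigr => i _; rewrite mxE mulrDl. Qed.

Lemma dotZl c u v : dot (c *: u) v = c * dot u v.
Proof. by rewrite /dot mulr_sumr; apply: eq_bigr => i _; rewrite mxE mulrA. Qed.

Lemma dotNl u v : dot (- u) v = - dot u v.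
Proof. by rewrite -scaleN1r dotZl mulN1r. Qed.

Lemma dotDr u v x : dot x (u + v) = dot x u + dot x v.
Proof. by rewrite dotC dotDl !(dotC x). Qed.

Lemma dotZr c u v : dot v (c *: u) = c * dot v u.
Proof. by rewrite dotC dotZl dotC. Qed.

Lemma dotNr u v : dot v (- u) = - dot v u.
Proof. by rewrite dotC dotNl dotC. Qed.

Lemma dotBl u v x : dot (u - v) x = dot u x - dot v x.
Proof. by rewrite dotDl dotNl. Qed.

Lemma dotBr u v x : dot x (u - v) = dot x u - dot x v.
Proof. by rewrite dotDr dotNr. Qed.

Lemma dot_sumr (I : finType) (F : I -> V) v :
  dot v (\sum_i F i) = \sum_i dot v (F i).
Proof.
apply: (big_morph (dot v)) => [x y|]; first exact: dotDr.
by rewrite -(scale0r 0) dotZr mul0r.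
Qed.

Lemma dot_ge0 v : 0 <= dot v v.
Proof. by apply: sumr_ge0 => i _; rewrite -expr2 sqr_ge0. Qed.

Lemma dot_gt0 v : v != 0 -> 0 < dot v v.
Proof.
move=> v_nz; rewrite lt_def dot_ge0 andbT; apply: contra v_nz => /eqP vv0.
have v_sq0 k : v 0 k * v 0 k = 0.
  by apply: (psumr_eq0P _ vv0) => // i _; rewrite -expr2 sqr_ge0.
apply/eqP/rowP => k; rewrite mxE.
by have /eqP := v_sq0 k; rewrite mulf_eq0 orbb => /eqP.
Qed.

Lemma dot_neq0 v : v != 0 -> dot v v != 0.
Proof. by move/dot_gt0; rewrite lt0r => /andP[]. Qed.

Lemma pairingE x a : pairing x a = 2 * dot x a / dot a a.
Proof. by rewrite /pairing /coroot dotZr mulrAC. Qed.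

Lemma pairing_ge0E x a : a != 0 -> (0 <= pairing x a) = (0 <= dot x a).
Proof.
move=> a_nz; rewrite pairingE pmulr_lge0 ?invr_gt0 ?dot_gt0 //.
by rewrite pmulr_rge0.
Qed.

Lemma pairingDl x y a : pairing (x + y) a = pairing x a + pairing y a.
Proof. exact: dotDl. Qed.

Lemma pairingZl c x a : pairing (c *: x) a = c * pairing x a.
Proof. exact: dotZl. Qed.

Lemma pairingNr x a : pairing x (- a) = - pairing x a.
Proof. by rewrite !pairingE dotNr dotNl dotNr opprK mulrN mulNr. Qed.

Lemma pairing_aa a : a != 0 -> pairing a a = 2.
Proof. by move/dot_neq0 => aa_nz; rewrite pairingE; field. Qed.

Lemma reflD a x y : refl a (x + y) = refl a x + refl a y.
Proof. by rewrite /refl pairingDl scalerDl opprD addrACA. Qed.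

Lemma reflZ a c x : refl a (c *: x) = c *: refl a x.
Proof. by rewrite /refl pairingZl scalerBr scalerA. Qed.

Lemma refl_self a : a != 0 -> refl a a = - a.
Proof.
by move=> a_nz; rewrite /refl pairing_aa // scaler_nat mulr2n opprD addNKr.
Qed.

Lemma refl_invol a x : a != 0 -> refl a (refl a x) = x.
Proof.
move=> a_nz; rewrite {2}/refl reflD -scaleNr reflZ refl_self //.
by rewrite /refl scaleNr scalerN opprK subrK.
Qed.

Lemma dot_refl a x y : a != 0 -> dot (refl a x) (refl a y) = dot x y.
Proof.
move/dot_neq0 => aa_nz; rewrite /refl !dotBl !dotBr !dotZl !dotZr !pairingE.
by rewrite (dotC a y); field.
Qed.

Lemma corootN a : coroot (- a) = - coroot a.
Proof. by rewrite /coroot dotNl dotNr opprK scalerN. Qed.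

Lemma coroot_refl a b : a != 0 -> coroot (refl a b) = refl a (coroot b).
Proof. by move=> a_nz; rewrite /coroot dot_refl // reflZ. Qed.

Lemma coroot_coroot a : a != 0 -> coroot (coroot a) = a.
Proof.
move/dot_neq0 => aa_nz; rewrite {1}/coroot dotZl dotZr scalerA /coroot.
by rewrite -[RHS]scale1r; congr (_ *: _); field.
Qed.

Lemma coroot_inj a b : a != 0 -> b != 0 -> coroot a = coroot b -> a = b.
Proof.
by move=> a_nz b_nz eq_ab; rewrite -(coroot_coroot a_nz) eq_ab coroot_coroot.
Qed.

(* If <a, b^vee> = 2, then replacing b by - s_a b negates a^vee - b^vee; this
   is the reflection trick behind the maximality of alpha_0^vee. *)
Lemma coroot_diff_refl a b : a != 0 -> pairing a b = 2 ->
  coroot a - coroot (- refl a b) = - (coroot a - coroot b).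
Proof.
move=> a_nz ab2; rewrite corootN coroot_refl // /refl.
have -> : pairing (coroot b) a *: a = 2 *: coroot a.
  rewrite /pairing dotC {1}/coroot dotZl -/(pairing a b) ab2 /coroot scalerA.
  by rewrite mulrC.
by apply/rowP => i; rewrite !mxE; ring.
Qed.

End InnerProduct.

Section Integrality.
Variable R : realFieldType.

Lemma is_intD (x y : R) : is_int x -> is_int y -> is_int (x + y).
Proof. by move=> [a ->] [b ->]; exists (a + b); rewrite intrD. Qed.

Lemma is_int_nat (k : nat) : is_int (k%:R : R).
Proof. by exists k%:Z. Qed.

Lemma is_int_gap (x y : R) : is_int x -> is_int y -> x < y -> x + 1 <= y.
Proof. by move=> [a ->] [b ->]; rewrite ltr_int -lezD1 -(ler_int R) intrD. Qed.

End Integrality.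

Arguments is_int_nat {R} k.

Section WeylWords.
Variables (R : realFieldType) (n : nat).
Notation V := 'rV[R]_n.
Implicit Types x y a : V.
Variable D : 'I_n -> V.
Hypothesis D_neq0 : forall i, D i != 0.

Lemma weylD s x y : weyl_act D s (x + y) = weyl_act D s x + weyl_act D s y.
Proof. by elim: s => //= i s ->; rewrite reflD. Qed.

Lemma weylZ s c x : weyl_act D s (c *: x) = c *: weyl_act D s x.
Proof. by elim: s => //= i s ->; rewrite reflZ. Qed.

Lemma weylN s x : weyl_act D s (- x) = - weyl_act D s x.
Proof. by rewrite -scaleN1r weylZ scaleN1r. Qed.

Lemma dot_weyl s x y : dot (weyl_act D s x) (weyl_act D s y) = dot x y.
Proof. by elim: s => //= i s <-; rewrite dot_refl. Qed.

Lemma pairing_weyl s x a :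
  pairing (weyl_act D s x) (weyl_act D s a) = pairing x a.
Proof. by rewrite !pairingE !dot_weyl. Qed.

Lemma weyl_refl s a x :
  weyl_act D s (refl a x) = refl (weyl_act D s a) (weyl_act D s x).
Proof. by rewrite /refl weylD weylN weylZ pairing_weyl. Qed.

Lemma weyl_rev s x : weyl_act D s (weyl_act D (rev s) x) = x.
Proof.
elim: s x => //= i s IHs x.
by rewrite rev_cons /weyl_act foldr_rcons -!/(weyl_act D _ _) IHs refl_invol.
Qed.

End WeylWords.

Section Base.
Variables (R : realFieldType) (n : nat).
Notation V := 'rV[R]_n.
Implicit Types x v a b : V.
Variables (Rs : seq V) (D : 'I_n -> V).
Hypothesis HR : irred_reduced_root_system Rs.
Hypothesis HB : is_base Rs D.

Lemma root_neq0 a : a \in Rs -> a != 0.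
Proof. by case: HR => Rs0 _ a_in; apply: contraNneq Rs0 => <-. Qed.

Lemma simple_in i : D i \in Rs.
Proof. by case: HB. Qed.

Lemma simple_neq0 i : D i != 0.
Proof. exact/root_neq0/simple_in. Qed.

Lemma refl_in a b : a \in Rs -> b \in Rs -> refl a b \in Rs.
Proof. by case: HR => _ [_ [refl_closed _]]; apply: refl_closed. Qed.

Lemma opp_in a : a \in Rs -> - a \in Rs.
Proof. by move=> a_in; rewrite -refl_self ?root_neq0 //; apply: refl_in. Qed.

Lemma root_weight a : a \in Rs -> weight Rs a.
Proof. by case: HR => _ [_ [_ [int_closed _]]] a_in b b_in; apply: int_closed. Qed.

Lemma reduced a b c : a \in Rs -> b \in Rs -> b = c *: a -> c = 1 \/ c = -1.
Proof. by case: HR => _ [_ [_ [_ [red _]]]]; apply: red. Qed.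

Lemma weyl_in s a : a \in Rs -> weyl_act D s a \in Rs.
Proof. by elim: s => //= i s IHs a_in; apply: refl_in (simple_in i) (IHs a_in). Qed.

(* The Weyl group permutes roots, hence preserves the weight lattice. *)
Lemma weightD x y : weight Rs x -> weight Rs y -> weight Rs (x + y).
Proof.
by move=> wx wy a a_in; rewrite pairingDl; apply: is_intD; [exact: wx | exact: wy].
Qed.

Lemma weight_weyl s x : weight Rs x -> weight Rs (weyl_act D s x).
Proof.
move=> wx a a_in; rewrite -(weyl_rev simple_neq0 s a) (pairing_weyl simple_neq0).
exact/wx/weyl_in.
Qed.

(* The simple roots form a basis of V: they span since the roots do, and
   there are n of them. *)
Definition simple_mx : 'M[R]_n := \matrix_(i < n) D i.

Lemma comb_simple_mx (c : 'I_n -> R) :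
  \sum_i c i *: D i = (\row_i c i) *m simple_mx.
Proof. by rewrite mulmx_sum_row; apply: eq_bigr => i _; rewrite mxE rowK. Qed.

Lemma simple_mx_unit : simple_mx \in unitmx.
Proof.
rewrite -row_full_unit -sub1mx; apply/row_subP => i.
case: HR => _ [span _]; have [c ->] := span (row i 1%:M).
apply: summx_sub => j _; apply: scalemx_sub.
have /HB.2 [k [-> _]] : Rs`_j \in Rs by apply: mem_nth.
by rewrite (comb_simple_mx (fun i => (k i)%:~R)) submxMl.
Qed.

Lemma simple_coef_uniq (c d : 'I_n -> R) :
  \sum_i c i *: D i = \sum_i d i *: D i -> forall i, c i = d i.
Proof.
rewrite !comb_simple_mx => /(congr1 (mulmx^~ (invmx simple_mx))).
rewrite !mulmxK ?simple_mx_unit // => eq_cd i.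
by have := congr1 (fun r : 'rV[R]_n => r 0 i) eq_cd; rewrite !mxE.
Qed.

Lemma sum_delta (j : 'I_n) (p : R) : \sum_l ((l == j)%:R * p) *: D l = p *: D j.
Proof.
rewrite (bigD1 j) //= eqxx mul1r big1 ?addr0 // => l /negbTE ->.
by rewrite mul0r scale0r.
Qed.

Lemma simple_coef (c : 'I_n -> R) j p :
  \sum_l c l *: D l = p *: D j -> c j = p.
Proof. by rewrite -sum_delta => /simple_coef_uniq /(_ j); rewrite eqxx mul1r. Qed.

Definition cone v :=
  exists c : 'I_n -> R, v = \sum_i c i *: D i /\ forall i, 0 <= c i.

Lemma cone_antisym v : cone v -> cone (- v) -> v = 0.
Proof.
move=> [c [def_v c_ge0]] [d [def_nv d_ge0]].
have eq_cd : \sum_i c i *: D i = \sum_i (- d i) *: D i.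
  by rewrite -def_v (eq_bigr _ (fun i _ => scaleNr _ _)) sumrN -def_nv opprK.
have c0 i : c i = 0.
  by have := simple_coef_uniq eq_cd i; have := c_ge0 i; have := d_ge0 i; lra.
by rewrite def_v big1 // => i _; rewrite c0 scale0r.
Qed.

Lemma cone_dot_ge0 x v : (forall i, 0 <= dot x (D i)) -> cone v -> 0 <= dot x v.
Proof.
move=> x_ge0 [c [-> c_ge0]]; rewrite dot_sumr; apply: sumr_ge0 => i _.
by rewrite dotZr mulr_ge0.
Qed.

Lemma dominant_dot_ge0 x v : dominant Rs D x -> cone v -> 0 <= dot x v.
Proof.
move=> [_ x_dom]; apply: cone_dot_ge0 => i.
by rewrite -pairing_ge0E ?simple_neq0.
Qed.

Lemma pos_root_cone b : pos_root Rs D b -> cone b.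
Proof.
move=> [_ [k [-> k_ge0]]]; exists (fun i => (k i)%:~R).
by split=> // i; rewrite ler0z.
Qed.

Lemma pos_simple i : pos_root Rs D (D i).
Proof.
split; first exact: simple_in.
exists (fun l => (l == i)%:Z); split; last by move=> l; case: (l == i).
rewrite -{1}(scale1r (D i)) -sum_delta; apply: eq_bigr => l _.
by case: (l == i); rewrite ?mul1r ?mul0r.
Qed.

Lemma pos_neg_excl b : pos_root Rs D b -> neg_root Rs D b -> False.
Proof.
move=> b_pos b_neg.
have b0 := cone_antisym (pos_root_cone b_pos) (pos_root_cone b_neg).
by case: b_pos => b_in _; move: (root_neq0 b_in); rewrite b0 eqxx.
Qed.

Lemma pos_or_neg b : b \in Rs -> pos_root Rs D b \/ neg_root Rs D b.
Proof.
move=> b_in; have [k [def_b [k_ge0|k_le0]]] := HB.2 b b_in.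
  by left; split=> //; exists k.
right; split; first exact: opp_in.
exists (fun i => - k i); split=> [|i]; last by rewrite oppr_ge0.
by rewrite def_b -sumrN; apply: eq_bigr => i _; rewrite intrN scaleNr.
Qed.

(* Part (iib) in general form: if x + a is dominant for a negative root a,
   then <x, a^vee> <= -2, because x + a pairs nonnegatively with - a > 0. *)
Lemma dominant_shift_neg_root x a :
  dominant Rs D (x + a) -> neg_root Rs D a -> pairing x a <= -2.
Proof.
move=> dom a_neg; have a_nz : a != 0 by rewrite -oppr_eq0 root_neq0 // a_neg.1.
have := dominant_dot_ge0 dom (pos_root_cone a_neg).
have aa_gt0 := dot_gt0 a_nz.
by rewrite dotNr dotDl pairingE ler_pdivrMr //; lra.
Qed.

(* s_i makes no positive root negative except alpha_i itself (here the
   reducedness of the root system is used). *)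
Lemma simple_refl_neg b i :
  pos_root Rs D b -> neg_root Rs D (refl (D i) b) -> b = D i.
Proof.
move=> b_pos b_neg; have [c [def_b c_ge0]] := pos_root_cone b_pos.
have [d [def_nb d_ge0]] := pos_root_cone b_neg.
have coef_sum : \sum_l (c l + d l) *: D l = (pairing b (D i)) *: D i.
  rewrite (eq_bigr _ (fun l _ => scalerDl _ _ _)) big_split /= -def_b -def_nb.
  by rewrite /refl opprB addrC subrK.
have c0 l : l != i -> c l = 0.
  move=> l_i; have := simple_coef_uniq (etrans coef_sum (esym (sum_delta _ _))) l.
  by rewrite (negbTE l_i) mul0r; have := c_ge0 l; have := d_ge0 l; lra.
have b_ci : b = c i *: D i.
  by rewrite def_b (bigD1 i) //= big1 ?addr0 // => l /c0 ->; rewrite scale0r.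
case: (reduced (simple_in i) b_pos.1 b_ci) => ci1.
  by rewrite b_ci ci1 scale1r.
by move: (c_ge0 i); rewrite ci1 ler0N1.
Qed.

Lemma deletion s b : pos_root Rs D b -> neg_root Rs D (weyl_act D s b) ->
  exists t : seq 'I_n, (size t < size s)%N /\
     forall x, weyl_act D t x = weyl_act D s (refl b x).
Proof.
elim: s => [|i s IHs] b_pos sb_neg; first by case: (pos_neg_excl b_pos sb_neg).
have [sb_pos|sb_neg'] := pos_or_neg (weyl_in s b_pos.1).
  have def_sb := simple_refl_neg sb_pos sb_neg.
  exists s; split=> // x /=.
  by rewrite (weyl_refl simple_neq0) def_sb refl_invol ?simple_neq0.
have [t [size_t def_t]] := IHs b_pos sb_neg'.
by exists (i :: t); split=> [|x /=]; rewrite ?ltnS ?def_t.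
Qed.

End Base.

Section HighestRoot.
Variables (R : realFieldType) (n : nat).
Notation V := 'rV[R]_n.
Implicit Types b : V.
Variables (Rs : seq V) (D : 'I_n -> V) (a0 : V).
Hypothesis HR : irred_reduced_root_system Rs.
Hypothesis HB : is_base Rs D.
Hypothesis HA0 : is_alpha0 Rs D a0.

Lemma a0_in : a0 \in Rs.
Proof. by case: HA0 => [[]]. Qed.

Lemma a0_neq0 : a0 != 0.
Proof. exact: (root_neq0 HR a0_in). Qed.

Lemma highest_cone b : b \in Rs -> cone D (coroot a0 - coroot b).
Proof.
case: HA0 => _ hi /hi [k [-> k_ge0]].
exists (fun i => (k i)%:~R * (2 / dot (D i) (D i))); split.
  by apply: eq_bigr => i _; rewrite /coroot scalerA.
by move=> i; rewrite mulr_ge0 ?ler0z ?divr_ge0 ?dot_ge0.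
Qed.

(* alpha_0 is dominant: the coefficient of alpha_j in
   alpha_0^vee - (s_j alpha_0)^vee is a positive multiple of <alpha_0, alpha_j>. *)
Lemma a0_dot_simple_ge0 j : 0 <= dot a0 (D j).
Proof.
have Dj_nz := simple_neq0 HR HB j.
have [c [def_c c_ge0]] := highest_cone (refl_in HR (simple_in HB j) a0_in).
move: def_c; rewrite coroot_refl // /refl subKr => /esym /(simple_coef HR HB) cj.
have := c_ge0 j; rewrite cj pairing_ge0E // dotC /coroot dotZr.
by rewrite pmulr_rge0 ?divr_gt0 ?dot_gt0 ?a0_neq0 // dotC.
Qed.

Lemma a0_pairing_pos b : pos_root Rs D b -> 0 <= pairing a0 b.
Proof.
move=> b_pos; rewrite pairing_ge0E ?(root_neq0 HR b_pos.1) //.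
exact: (cone_dot_ge0 a0_dot_simple_ge0 (pos_root_cone b_pos)).
Qed.

Lemma a0_max b : b \in Rs -> 2 <= pairing a0 b -> b = a0.
Proof.
move=> b_in ab_ge2; have cone_diff := highest_cone b_in.
have ab2 : pairing a0 b = 2.
  have := cone_dot_ge0 a0_dot_simple_ge0 cone_diff.
  have -> : dot a0 (coroot a0 - coroot b) = pairing a0 a0 - pairing a0 b.
    exact: dotBr.
  by rewrite pairing_aa ?a0_neq0; lra.
have := highest_cone (opp_in HR (refl_in HR a0_in b_in)).
rewrite coroot_diff_refl ?a0_neq0 // => cone_ndiff.
apply/(coroot_inj (root_neq0 HR b_in) a0_neq0)/esym/eqP.
by rewrite -subr_eq0 (cone_antisym HR HB cone_diff cone_ndiff).
Qed.

End HighestRoot.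

Section ShortestWord.
Variables (R : realFieldType) (n : nat).
Notation V := 'rV[R]_n.
Implicit Types x b : V.
Variables (Rs : seq V) (D : 'I_n -> V) (mu : V) (s : seq 'I_n).
Hypothesis HR : irred_reduced_root_system Rs.
Hypothesis HB : is_base Rs D.
Hypothesis Hs : shortest_dominating_word Rs D mu s.

Local Notation w := (weyl_act D s).
Local Notation mup := (w mu).

Lemma mup_dominant : dominant Rs D mup.
Proof. by case: Hs. Qed.

(* Minimality of s: mu+ is not orthogonal to any root that w makes negative
   from a positive one, otherwise w s_b mu = mu+ with a shorter word. *)
Lemma inversion_pairing_neq0 b :
  pos_root Rs D b -> neg_root Rs D (w b) -> pairing mup (w b) != 0.
Proof.
move=> b_pos wb_neg; apply/eqP => mup_wb0.
have [t [size_t def_t]] := deletion HR HB b_pos wb_neg.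
have : dominant Rs D (weyl_act D t mu).
  rewrite def_t (weyl_refl (simple_neq0 HR HB)) /refl mup_wb0 scale0r subr0.
  exact: mup_dominant.
by move/Hs.2; rewrite leqNgt size_t.
Qed.

Definition simple_preimage i : V := weyl_act D (rev s) (D i).

Lemma simple_preimage_in i : simple_preimage i \in Rs.
Proof. exact/(weyl_in HR HB)/(simple_in HB). Qed.

Lemma w_simple_preimage i : w (simple_preimage i) = D i.
Proof. exact/weyl_rev/(simple_neq0 HR HB). Qed.

Lemma pairing_w_simple x i : pairing (w x) (D i) = pairing x (simple_preimage i).
Proof. by rewrite -{1}(w_simple_preimage i) (pairing_weyl (simple_neq0 HR HB)). Qed.

Lemma descent_pairing_ge1 i :
  neg_root Rs D (simple_preimage i) -> 1 <= pairing mup (D i).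
Proof.
move=> b_neg; have wb_neg : neg_root Rs D (w (- simple_preimage i)).
  by rewrite weylN w_simple_preimage /neg_root opprK; apply: pos_simple.
have := inversion_pairing_neq0 b_neg wb_neg.
rewrite weylN w_simple_preimage pairingNr oppr_eq0 => mup_i_nz.
have mup_i_ge0 := mup_dominant.2 i.
have := is_int_gap (is_int_nat 0) (mup_dominant.1 _ (simple_in HB i)).
by rewrite add0r; apply; rewrite lt_def mup_i_nz.
Qed.

Lemma minuscule_shift om : minuscule Rs D om -> dominant Rs D (mup + w om).
Proof.
move=> [[om_wt _] [_ om_min]]; split.
  exact: weightD mup_dominant.1 (weight_weyl HR HB s om_wt).
move=> i; rewrite pairingDl (pairing_w_simple om).
have mup_i_ge0 := mup_dominant.2 i.
have [b_pos|b_neg] := pos_or_neg HR HB (simple_preimage_in i).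
  by case: (om_min _ b_pos) => ->; lra.
have := descent_pairing_ge1 b_neg.
by case: (om_min _ b_neg); rewrite pairingNr => om_b; lra.
Qed.

Variable a0 : V.
Hypothesis HA0 : is_alpha0 Rs D a0.

Lemma a0_shift_negative i :
  pairing (mup + w a0) (D i) < 0 ->
  w a0 = - D i /\ pairing mup (D i) = 1.
Proof.
rewrite pairingDl (pairing_w_simple a0) => neg_i.
have mup_i_ge0 := mup_dominant.2 i.
have [b_pos|b_neg] := pos_or_neg HR HB (simple_preimage_in i).
  by have := a0_pairing_pos HR HB HA0 b_pos; lra.
have mup_i_ge1 := descent_pairing_ge1 b_neg.
have a0_nb_int := root_weight HR (a0_in HA0) b_neg.1.
have a0_nb_ge2 : 2 <= pairing a0 (- simple_preimage i).
  by have := is_int_gap (is_int_nat 1) a0_nb_int; rewrite pairingNr; lra.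
have def_a0 := a0_max HR HB HA0 b_neg.1 a0_nb_ge2.
have a0_b : pairing a0 (simple_preimage i) = -2.
  rewrite -[simple_preimage i]opprK pairingNr def_a0.
  by rewrite pairing_aa ?(a0_neq0 HR HA0).
split; first by rewrite -def_a0 weylN w_simple_preimage.
have := is_int_gap (mup_dominant.1 _ (simple_in HB i)) (is_int_nat 2).
by lra.
Qed.

Lemma a0_shift_not_dominant : ~ dominant Rs D (mup + w a0) ->
  exists j, w a0 = - D j /\ pairing mup (D j) = 1.
Proof.
move=> not_dom.
have /existsP [i neg_i] : [exists i, pairing (mup + w a0) (D i) < 0].
  apply: contraT; rewrite negb_exists => /forallP all_ge0; exfalso.
  apply: not_dom; split=> [|i]; last by rewrite leNgt all_ge0.
  exact: weightD mup_dominant.1 (weight_weyl HR HB s (root_weight HR (a0_in HA0))).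
by exists i; apply: a0_shift_negative.
Qed.

End ShortestWord.

Theorem mainTheorem20 (R : realFieldType) (n : nat) (Rs : seq 'rV[R]_n)
    (D : 'I_n -> 'rV[R]_n) (a0 mu : 'rV[R]_n) (s : seq 'I_n) :
  irred_reduced_root_system Rs ->
  is_base Rs D ->
  is_alpha0 Rs D a0 ->
  weight Rs mu ->
  shortest_dominating_word Rs D mu s ->
  let w := weyl_act D s in
  let mup := w mu in
  (* (i) *)
  (forall om, minuscule Rs D om -> dominant Rs D (mup + w om)) /\
  (* (iia) *)
  (~ dominant Rs D (mup + w a0) ->
     exists j : 'I_n, w a0 = - D j /\ pairing mup (D j) = 1) /\
  (* (iib) *)
  (dominant Rs D (mup + w a0) -> neg_root Rs D (w a0) ->
     pairing mup (w a0) <= -2).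
Proof.
move=> HR HB HA0 _ Hs w mup; split; last split.
- exact: minuscule_shift HR HB Hs.
- exact: (a0_shift_not_dominant HR HB Hs HA0).
- exact: (dominant_shift_neg_root HR HB).
Qed.
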